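(* Let $s=0$ and $\lambda\in\mathbb{C}$. Every odd superderivation of $\mathfrak{L}^0_\lambda$ of degree $0$ is inner; more precisely, it equals $\mathrm{ad}(aG_0+bH_0)$ for some $a,b\in\mathbb{C}$.
   Context: For $s\in\{0,\tfrac12\}$ and $\lambda\in\mathbb{C}$, $\mathfrak{L}^s_\lambda$ is the complex Lie superalgebra with basis $\{L_m,I_m,G_p,H_p : m\in\mathbb{Z},\ p\in s+\mathbb{Z}\}$, even part spanned by the $L_m,I_m$, odd part spanned by the $G_p,H_p$, and brackets $[L_m,L_n]=(m-n)L_{m+n}$, $[L_m,I_n]=(m-n)I_{m+n}$, $[L_m,H_p]=(\tfrac m2-p)H_{m+p}$, $[L_m,G_p]=(\tfrac m2-p)G_{m+p}+\lambda(m+1)H_{m+p}$, $[I_m,G_p]=(m-2p)H_{m+p}$, $[G_p,G_q]=I_{p+q}$, plus those given by super-antisymmetry $[y,x]=-(-1)^{|x||y|}[x,y]$; all other brackets of basis elements are zero. $\mathfrak{L}_r$ is spanned by basis elements of index $r$. A superderivation of parity $a$ is a linear map $D$ shifting parity by $a$ with $D([x,y])=[D(x),y]+(-1)^{a|x|}[x,D(y)]$ for homogeneous $x,y$; it has degree $r$ if $D(\mathfrak{L}_q)\subset\mathfrak{L}_{q+r}$. $\mathrm{ad}\,x(y)=[x,y]$. *)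

From HB Require Import structures.
From mathcomp Require Import all_boot all_order all_algebra.
Set Implicit Arguments. Unset Strict Implicit. Unset Printing Implicit Defensive.
Import Order.TTheory GRing.Theory Num.Theory.
Local Open Scope ring_scope.

(* The four families of basis vectors of L^0_lambda (s = 0, so every index
   lies in Z):  kL ~ L_m, kI ~ I_m, kG ~ G_p, kH ~ H_p. *)
Inductive kind := kL | kI | kG | kH.

Definition kind_eqb (a b : kind) : bool :=
  match a, b with
  | kL, kL | kI, kI | kG, kG | kH, kH => true
  | _, _ => false
  end.

Lemma kind_eqP : Equality.axiom kind_eqb.
Proof. by case; case; constructor. Qed.

HB.instance Definition _ := hasDecEq.Build kind kind_eqP.

Definition basis := (kind * int)%type.

Definition bodd (b : basis) : bool :=
  match b.1 with kG | kH => true | _ => false end.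

(* Elements of the algebra are given as finite formal linear combinations
   (lists of (coefficient, basis element)); [coef v c] is the coefficient of
   the basis element c in v. *)
Definition elt (F : fieldType) := seq (F * basis).

Definition coef (F : fieldType) (v : elt F) (c : basis) : F :=
  \sum_(p <- v | p.2 == c) p.1.

Definition scl (F : fieldType) (a : F) (v : elt F) : elt F :=
  [seq (a * p.1, p.2) | p <- v].

Definition br (F : fieldType) (lam : F) (x y : basis) : elt F :=
  let: (kx, m) := x in
  let: (ky, n) := y in
  let half (a b : int) : F := a%:~R / 2%:R - b%:~R in
  match kx, ky with
  | kL, kL => [:: ((m - n)%:~R, (kL, m + n))]
  | kL, kI => [:: ((m - n)%:~R, (kI, m + n))]
  | kI, kL => [:: (- (n - m)%:~R, (kI, m + n))]
  | kL, kH => [:: (half m n, (kH, m + n))]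
  | kH, kL => [:: (- half n m, (kH, m + n))]
  | kL, kG => [:: (half m n, (kG, m + n)); (lam * (m + 1)%:~R, (kH, m + n))]
  | kG, kL => [:: (- half n m, (kG, m + n)); (- (lam * (n + 1)%:~R), (kH, m + n))]
  | kI, kG => [:: ((m - 2 * n)%:~R, (kH, m + n))]
  | kG, kI => [:: (- (n - 2 * m)%:~R, (kH, m + n))]
  | kG, kG => [:: (1, (kI, m + n))]
  | _, _ => [::]
  end.

Definition linext (F : fieldType) (D : basis -> elt F) (v : elt F) : elt F :=
  flatten [seq scl p.1 (D p.2) | p <- v].

Definition brEB (F : fieldType) (lam : F) (v : elt F) (y : basis) : elt F :=
  flatten [seq scl p.1 (br lam p.2 y) | p <- v].
Definition brBE (F : fieldType) (lam : F) (x : basis) (v : elt F) : elt F :=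
  flatten [seq scl p.1 (br lam x p.2) | p <- v].

Definition odd_superder_deg0 (F : fieldType) (lam : F) (D : basis -> elt F) :
  Prop :=
  [/\
      (forall b c, bodd c = bodd b -> coef (D b) c = 0),
      (forall b c, c.2 != b.2 -> coef (D b) c = 0) &
      (* super Leibniz rule with parity a = 1 *)
      (forall x y c,
         coef (linext D (br lam x y)) c =
         coef (brEB lam (D x) y) c
         + (-1) ^+ bodd x * coef (brBE lam x (D y)) c)].

From HB Require Import structures.
From mathcomp Require Import all_boot all_order all_algebra.
From mathcomp Require Import ring.
Import GRing.Theory.
Set Implicit Arguments.
Unset Strict Implicit.
Unset Printing Implicit Defensive.
Local Open Scope ring_scope.

(* The Leibniz rule
   on [H_m, G_n] kills D on the H_m and the L-part of D on the G_m; on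
   [L_m, G_n] it shows that D G_m = c I_m for a constant c and determines the
   G-part of D L_m; on [G_0, G_n] it determines D I_n.  What is left, the
   H-part of D L_m corrected by the contribution of c ad G_0, satisfies the
   cocycle equation of the Witt algebra, whose solutions in characteristic 0
   are the multiples of m: this is the contribution of ad H_0. *)

Definition kinds := [:: kL; kI; kG; kH].

Section FormalCombinations.
Variable F : fieldType.
Implicit Types (v w : elt F) (c : basis).

Lemma coef_nil c : coef ([::] : elt F) c = 0.
Proof. by rewrite /coef big_nil. Qed.

Lemma coef_cons (p : F * basis) v c :
  coef (p :: v) c = (if p.2 == c then p.1 else 0) + coef v c.
Proof. by rewrite /coef big_cons; case: ifP; rewrite ?add0r. Qed.

Lemma coef_cat v w c : coef (v ++ w) c = coef v c + coef w c.
Proof. by rewrite /coef big_cat. Qed.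

Lemma coef_scl (a : F) v c : coef (scl a v) c = a * coef v c.
Proof.
elim: v => [|p v IHv]; first by rewrite !coef_nil mulr0.
by rewrite /= !coef_cons IHv mulrDr; case: ifP; rewrite ?mulr0.
Qed.

Lemma coef_flatten_scl (f : basis -> elt F) v c :
  coef (flatten [seq scl p.1 (f p.2) | p <- v]) c
  = \sum_(p <- v) p.1 * coef (f p.2) c.
Proof.
elim: v => [|p v IHv]; first by rewrite big_nil coef_nil.
by rewrite /= coef_cat coef_scl IHv big_cons.
Qed.

Lemma sum_coef_supported (f : basis -> F) (s : seq basis) v :
  uniq s -> (forall b, b \notin s -> f b = 0) ->
  \sum_(p <- v) p.1 * f p.2 = \sum_(b <- s) coef v b * f b.
Proof.
move=> s_uniq f_supp; elim: v => [|p v IHv].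
  by rewrite big_nil big1 // => b _; rewrite coef_nil mul0r.
rewrite big_cons IHv.
under [in RHS]eq_bigr do rewrite coef_cons mulrDl.
rewrite big_split /=; congr (_ + _).
have [p_s|p_s] := boolP (p.2 \in s).
  rewrite (bigD1_seq p.2) //= eqxx big1 ?addr0 // => b /negPf b_p.
  by rewrite eq_sym b_p mul0r.
rewrite f_supp // mulr0 big1_seq // => b /andP[_ b_s].
by case: eqP => [p_b|]; [rewrite p_b b_s in p_s | rewrite mul0r].
Qed.

Lemma coef_flatten_scl_at (f : basis -> elt F) v c (t : int) :
  (forall b, b.2 != t -> coef (f b) c = 0) ->
  coef (flatten [seq scl p.1 (f p.2) | p <- v]) c
  = \sum_(k <- kinds) coef v (k, t) * coef (f (k, t)) c.
Proof.
move=> f_supp; rewrite coef_flatten_scl.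
rewrite (sum_coef_supported (f := fun b => coef (f b) c) (s := [seq (k, t) | k <- kinds]))
  ?big_map //.
case=> k i; have [->|i_t] := eqVneq i t; last by move=> _; apply: f_supp.
by case: k; rewrite !inE eqxx ?orbT.
Qed.

Lemma coef_linext (D : basis -> elt F) v c :
  coef (linext D v) c = \sum_(p <- v) p.1 * coef (D p.2) c.
Proof. exact: coef_flatten_scl. Qed.

End FormalCombinations.

Lemma addrKC (V : zmodType) (x y : V) : x + y - x = y.
Proof. by rewrite addrC addKr. Qed.

Section Brackets.
Variables (F : fieldType) (lam : F).

Lemma coef_br_off_index (x y c : basis) :
  c.2 != x.2 + y.2 -> coef (br lam x y) c = 0.
Proof.
case: x => kx m; case: y => ky n; case: c => kc q /= q_mn.
have off k : ((k, m + n) == (kc, q)) = false.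
  by rewrite xpair_eqE (eq_sym (m + n)) (negPf q_mn) andbF.
by case: kx; case: ky; rewrite /= ?coef_nil // !coef_cons ?off ?coef_nil ?addr0.
Qed.

Lemma coef_brEB (v : elt F) (y c : basis) :
  coef (brEB lam v y) c
  = \sum_(k <- kinds) coef v (k, c.2 - y.2) * coef (br lam (k, c.2 - y.2) y) c.
Proof.
apply: (coef_flatten_scl_at (f := fun b => br lam b y)) => b b_off.
by apply: coef_br_off_index; apply: contra b_off => /eqP ->; rewrite addrK.
Qed.

Lemma coef_brBE (v : elt F) (x c : basis) :
  coef (brBE lam x v) c
  = \sum_(k <- kinds) coef v (k, c.2 - x.2) * coef (br lam x (k, c.2 - x.2)) c.
Proof.
apply: (coef_flatten_scl_at (f := fun b => br lam x b)) => b b_off.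
by apply: coef_br_off_index; apply: contra b_off => /eqP ->; rewrite addrKC.
Qed.

End Brackets.

Lemma eq_kind_at (k k' : kind) (i : int) : ((k, i) == (k', i)) = (k == k').
Proof. by rewrite xpair_eqE eqxx andbT. Qed.

Section CharZero.
Variables (F : fieldType) (F_char0 : [pchar F] =i pred0).

Lemma pchar0_intr_neq0 (z : int) : z != 0 -> (z%:~R : F) != 0.
Proof.
have natr_eq0 := (pcharf0P F).1 F_char0.
case: z => n; first by rewrite -[(Posz n)%:~R]/(n%:R) natr_eq0.
by rewrite NegzE rmorphN /= oppr_eq0 -[(Posz n.+1)%:~R]/(n.+1%:R) natr_eq0.
Qed.

Lemma pchar0_2_neq0 : (2 : F) != 0.
Proof. exact: (pchar0_intr_neq0 (z := 2)). Qed.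

End CharZero.

Section LinearCombinations.
Variable R : idomainType.

Lemma eq_of_lincomb (z k l r x y : R) :
  l = r -> z != 0 -> (x - y) * z = k * (l - r) -> x = y.
Proof.
move=> -> z_neq0; rewrite subrr mulr0 => /eqP.
by rewrite mulf_eq0 (negPf z_neq0) orbF subr_eq0 => /eqP.
Qed.

Lemma eq_of_lincomb4 (z k1 k2 k3 k4 l1 r1 l2 r2 l3 r3 l4 r4 x y : R) :
  l1 = r1 -> l2 = r2 -> l3 = r3 -> l4 = r4 -> z != 0 ->
  (x - y) * z = k1 * (l1 - r1) + k2 * (l2 - r2) + k3 * (l3 - r3) + k4 * (l4 - r4) ->
  x = y.
Proof.
move=> -> -> -> -> z_neq0 e.
apply: (eq_of_lincomb (k := 0) (erefl (0 : R)) z_neq0).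
by rewrite e !subrr !mulr0 !addr0.
Qed.

End LinearCombinations.

Section WittCocycle.
Variables (F : fieldType) (F_char0 : [pchar F] =i pred0) (f : int -> F).
Hypothesis f_cocycle : forall m n : int,
  2 * (m - n)%:~R * f (m + n) = (2 * m - n)%:~R * f m + (m - 2 * n)%:~R * f n.

Local Notation intr_neq0 := (pchar0_intr_neq0 F_char0).

Ltac solve_field := field; rewrite ?(pchar0_2_neq0 F_char0) //.

Lemma witt_cocycle0 : f 0 = 0.
Proof.
have := f_cocycle 1 0; rewrite addr0 => e.
by apply: (eq_of_lincomb (k := -1) e (oner_neq0 F)); solve_field.
Qed.

Lemma witt_cocycleN (k : int) : f (- k) = - f k.
Proof.
have [->|k_neq0] := eqVneq k 0; first by rewrite oppr0 witt_cocycle0 oppr0.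
have := f_cocycle k (- k); rewrite subrr witt_cocycle0 => e.
apply: (eq_of_lincomb (z := (3 * k)%:~R) (k := -1) e); last by solve_field.
by rewrite intr_neq0 // mulf_eq0 negb_or k_neq0.
Qed.

Lemma witt_cocycle2 : f 2 = 2 * f 1.
Proof.
have := f_cocycle 2 (-1); rewrite (_ : 2 + -1 = 1) // witt_cocycleN => e.
by apply: (eq_of_lincomb (k := -1) e (intr_neq0 (z := 5) isT)); solve_field.
Qed.

Lemma witt_cocycle_nat (k : nat) : f k = k%:~R * f 1.
Proof.
elim: k => [|k IHk]; first by rewrite witt_cocycle0 mul0r.
have [->|k_gt0] := posnP k; first by rewrite mul1r.
have [->|k_neq1] := eqVneq k 1%N; first exact: witt_cocycle2.
have := f_cocycle k 1; rewrite IHk -(addn1 k) PoszD => e.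
apply: (eq_of_lincomb (z := (2 * (k%:Z - 1))%:~R) (k := 1) e); last by solve_field.
by rewrite intr_neq0 // mulf_eq0 negb_or subr_eq0.
Qed.

Lemma witt_cocycle_linear (m : int) : f m = m%:~R * f 1.
Proof.
case: m => k; first exact: witt_cocycle_nat.
by rewrite NegzE witt_cocycleN witt_cocycle_nat intrN mulNr.
Qed.

End WittCocycle.

Lemma exists_sub2_neq0 (m : int) : exists n : int, m - 2 * n != 0.
Proof.
by have [->|m_neq0] := eqVneq m 0; [exists 1 | exists 0; rewrite mulr0 subr0].
Qed.

Section OddDerivations.
Variables (F : fieldType) (F_char0 : [pchar F] =i pred0) (lam : F).
Variable D : basis -> elt F.
Hypothesis D_odd : forall b c, bodd c = bodd b -> coef (D b) c = 0.
Hypothesis D_deg0 : forall b c, c.2 != b.2 -> coef (D b) c = 0.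
Hypothesis D_leibniz : forall x y c,
  coef (linext D (br lam x y)) c
  = coef (brEB lam (D x) y) c + (-1) ^+ bodd x * coef (brBE lam x (D y)) c.

(* [dXY m] is the coefficient of Y_m in D X_m; by oddness and degree 0,
   these eight families determine D. *)
Local Notation dLG m := (coef (D (kL, m)) (kG, m)).
Local Notation dLH m := (coef (D (kL, m)) (kH, m)).
Local Notation dIG m := (coef (D (kI, m)) (kG, m)).
Local Notation dIH m := (coef (D (kI, m)) (kH, m)).
Local Notation dGL m := (coef (D (kG, m)) (kL, m)).
Local Notation dGI m := (coef (D (kG, m)) (kI, m)).
Local Notation dHL m := (coef (D (kH, m)) (kL, m)).
Local Notation dHI m := (coef (D (kH, m)) (kI, m)).

Local Notation intr_neq0 := (pchar0_intr_neq0 F_char0).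

Ltac solve_field := field; rewrite ?(pchar0_2_neq0 F_char0) //.

Ltac expand_leibniz x y c :=
  have := D_leibniz x y c;
  rewrite ?coef_brEB ?coef_brBE ?coef_linext /= ?addrK ?addrKC ?subrr ?subr0 ?add0r ?addr0;
  rewrite !big_cons ?big_nil /=;
  rewrite ?coef_cons ?coef_nil ?eq_kind_at /=;
  rewrite ?[coef (D (kL, _)) (kL, _)]D_odd ?[coef (D (kL, _)) (kI, _)]D_odd
          ?[coef (D (kI, _)) (kL, _)]D_odd ?[coef (D (kI, _)) (kI, _)]D_odd
          ?[coef (D (kG, _)) (kG, _)]D_odd ?[coef (D (kG, _)) (kH, _)]D_odd
          ?[coef (D (kH, _)) (kG, _)]D_odd ?[coef (D (kH, _)) (kH, _)]D_odd //.

Lemma dHL_eq0 (m : int) : dHL m = 0.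
Proof.
have [n mn_neq0] := exists_sub2_neq0 m.
expand_leibniz (kH, m) (kG, n) (kG, m + n) => e.
apply: (eq_of_lincomb (z := (m - 2 * n)%:~R) (k := -2) e (intr_neq0 mn_neq0)).
solve_field.
Qed.

Lemma leibniz_HG_H (m n : int) :
  dHI m * (m - 2 * n)%:~R + dGL n * (n%:~R / 2 - m%:~R) = 0.
Proof.
expand_leibniz (kH, m) (kG, n) (kH, m + n); rewrite dHL_eq0 => e.
by apply: (eq_of_lincomb (k := -1) e (oner_neq0 F)); solve_field.
Qed.

Lemma dGL_eq0 (n : int) : dGL n = 0.
Proof.
have dGL_off0 k : k != 0 -> dGL k = 0.
  move=> k_neq0; have e := leibniz_HG_H (2 * k) k.
  apply: (eq_of_lincomb (z := (3 * k)%:~R) (k := -2) e); last by solve_field.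
  by rewrite intr_neq0 // mulf_eq0 negb_or k_neq0.
have [->|] := eqVneq n 0; last exact: dGL_off0.
have e11 := leibniz_HG_H 1 1; rewrite dGL_off0 // in e11.
have dHI1 : dHI 1 = 0.
  by apply: (eq_of_lincomb (k := -1) e11 (oner_neq0 F)); solve_field.
have e10 := leibniz_HG_H 1 0; rewrite dHI1 in e10.
by apply: (eq_of_lincomb (k := -1) e10 (oner_neq0 F)); solve_field.
Qed.

Lemma dHI_eq0 (m : int) : dHI m = 0.
Proof.
have [n mn_neq0] := exists_sub2_neq0 m.
have e := leibniz_HG_H m n; rewrite dGL_eq0 in e.
apply: (eq_of_lincomb (z := (m - 2 * n)%:~R) (k := 1) e (intr_neq0 mn_neq0)).
solve_field.
Qed.

Lemma leibniz_LG_I (m n : int) :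
  (m%:~R / 2 - n%:~R) * dGI (m + n) = dLG m + dGI n * (m - n)%:~R.
Proof.
expand_leibniz (kL, m) (kG, n) (kI, m + n); rewrite dHI_eq0 dGL_eq0 => e.
by apply: (eq_of_lincomb (k := 1) e (oner_neq0 F)); solve_field.
Qed.

Lemma dGI_const (k : int) : dGI k = dGI 0.
Proof.
have [->|k_neq0] := eqVneq k 0; first by [].
have e1 := leibniz_LG_I k 0; rewrite addr0 in e1.
have e2 := leibniz_LG_I k (- k); rewrite subrr in e2.
have e3 := leibniz_LG_I (- k) 0; rewrite addr0 in e3.
have e4 := leibniz_LG_I (- k) k; rewrite addNr in e4.
(* eliminating dLG k and dLG (- k) leaves dGI k = -4 dGI (- k) = 16 dGI k modulo dGI 0 *)
apply: (eq_of_lincomb4 (z := (15 * k)%:~R) (k1 := -2) (k2 := 2) (k3 := -8) (k4 := 8)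
          e1 e2 e3 e4); last by solve_field.
by rewrite intr_neq0 // mulf_eq0 negb_or k_neq0.
Qed.

Lemma dLG_eq (m : int) : dLG m = - (m%:~R / 2) * dGI 0.
Proof.
have e := leibniz_LG_I m 0; rewrite addr0 (dGI_const m) in e.
by apply: (eq_of_lincomb (k := -1) e (oner_neq0 F)); solve_field.
Qed.

Lemma dIG_eq0 (n : int) : dIG n = 0.
Proof.
expand_leibniz (kG, 0%:Z) (kG, n) (kG, n); rewrite !dGL_eq0 => e.
by apply: (eq_of_lincomb (k := 1) e (oner_neq0 F)); solve_field.
Qed.

Lemma dIH_eq (n : int) : dIH n = - n%:~R * dGI 0.
Proof.
expand_leibniz (kG, 0%:Z) (kG, n) (kH, n); rewrite !dGL_eq0 dGI_const => e.
by apply: (eq_of_lincomb (k := 1) e (oner_neq0 F)); solve_field.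
Qed.

(* Shifting dLH by the contribution of ad G_0 turns the Leibniz rule on
   [L_m, L_n] into the cocycle equation of the Witt algebra. *)
Let dLH' (m : int) : F := dLH m + dGI 0 * lam * (m + 1)%:~R.

Lemma dLH'_cocycle (m n : int) :
  2 * (m - n)%:~R * dLH' (m + n) = (2 * m - n)%:~R * dLH' m + (m - 2 * n)%:~R * dLH' n.
Proof.
rewrite /dLH'; expand_leibniz (kL, m) (kL, n) (kH, m + n); rewrite !dLG_eq => e.
by apply: (eq_of_lincomb (k := 2) e (oner_neq0 F)); solve_field.
Qed.

Lemma dLH_eq (m : int) : dLH m = m%:~R * dLH' 1 - dGI 0 * lam * (m + 1)%:~R.
Proof.
rewrite -(witt_cocycle_linear F_char0 (f := dLH')) /dLH' ?addrK //.
exact: dLH'_cocycle.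
Qed.

Lemma odd_derivation_inner :
  exists a b : F, forall x c : basis,
    coef (D x) c = a * coef (br lam (kG, 0%Z) x) c + b * coef (br lam (kH, 0%Z) x) c.
Proof.
exists (dGI 0), (-2 * dLH' 1); case=> kx m [kc q].
have [->|q_m] := eqVneq q m; last first.
  by rewrite D_deg0 ?coef_br_off_index ?mulr0 ?addr0 //= add0r.
case: kx; case: kc; rewrite /= ?add0r ?coef_cons ?coef_nil ?eq_kind_at /=.
all: rewrite ?addr0 ?mulr0 ?addr0; try exact: D_odd.
- by rewrite dLG_eq; solve_field.
- by rewrite dLH_eq; solve_field.
- exact: dIG_eq0.
- by rewrite dIH_eq; solve_field.
- exact: dGL_eq0.
- by rewrite dGI_const mulr1.
- exact: dHL_eq0.
- exact: dHI_eq0.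
Qed.

End OddDerivations.

Theorem lemma2p5 (F : fieldType) (hF : [pchar F] =i pred0) (lam : F)
  (D : basis -> elt F) :
  odd_superder_deg0 lam D ->
  exists a b : F, forall (x c : basis),
    coef (D x) c = a * coef (br lam (kG, 0%Z) x) c + b * coef (br lam (kH, 0%Z) x) c.
Proof. by case=> D_odd D_deg0 D_leibniz; exact: odd_derivation_inner. Qed.
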